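(* Let $\lambda(z)=\sum_{i\ge 2}\lambda_i z^{i-1}$ be a polynomial with $\lambda_i\ge 0$ and $\sum_i\lambda_i=1$, and let $j=1/\int_0^1\lambda(z)\,dz$. Let $\bar\alpha_j$ be the largest $\alpha\ge 0$ such that $\lambda\!\left(1-e^{-\alpha j x}\right)\le x$ for all $x\in(0,1]$. For an integer $k\ge 2$ and $\alpha>0$ with $\alpha j\le k-1$, set $\delta=\alpha j/(k-1)$ and define the density-evolution sequence $x_0=1$, $x_{i+1}=\delta\,\lambda\!\left(1-(1-x_i)^{k-1}\right)$ for $i\ge 0$. (a) If $\alpha>\bar\alpha_j$, then for every integer $k\ge 2$ with $\alpha j\le k-1$, the sequence $(x_i)$ does not converge to $0$. (b) If $0<\alpha<\bar\alpha_j$, then there exists $K<\infty$ such that for all integers $k\ge K$ the sequence $(x_i)$ converges to $0$.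
   Context: This is the density-evolution (DE) recursion for iterative erasure decoding on the binary erasure channel with erasure probability $\delta$ of a check-regular LDPC ensemble with variable-node edge degree distribution $\lambda$ and all check nodes of degree $k$; convergence of $x_i$ to $0$ corresponds to decoding success with high probability as the block length tends to infinity, and non-convergence to failure. *)

From Stdlib Require Import Reals.
Open Scope R_scope.

Definition lam_poly (lam : nat -> R) (D : nat) (z : R) : R :=
  sum_f_R0 (fun i => lam i * z ^ (i - 1)) D.

Definition degree_distribution (lam : nat -> R) (D : nat) : Prop :=
  (forall i, (i < 2)%nat -> lam i = 0) /\
  (forall i, (D < i)%nat -> lam i = 0) /\
  (forall i, 0 <= lam i) /\
  sum_f_R0 lam D = 1.

Definition alpha_ok (lam : nat -> R) (D : nat) (j alpha : R) : Prop :=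
  0 <= alpha /\
  forall x, 0 < x <= 1 -> lam_poly lam D (1 - exp (- (alpha * j * x))) <= x.

Fixpoint de_seq (lam : nat -> R) (D : nat) (delta : R) (k : nat) (i : nat) : R :=
  match i with
  | O => 1
  | S i' => delta * lam_poly lam D (1 - (1 - de_seq lam D delta k i') ^ (k - 1))
  end.

From Stdlib Require Import Reals Lra Lia Psatz Classical.
Open Scope R_scope.

(* Write n = k - 1, delta = alpha j / n and F(x) = delta * lambda(1 - (1 - x)^n),
   so that x_(i+1) = F(x_i).  F is monotone and maps [0,1] into [0,delta].
   The comparison between (1 - x)^n and exp(-n x) drives both parts:
   - (1 - y)^n <= exp(-n y): if alpha is not admissible, a point x0 with
     x0 < lambda(1 - exp(-alpha j x0)) yields y = delta x0 with y <= F(y),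
     so by monotonicity the orbit of 1 never drops below y > 0;
   - exp(-n x/(1-x)) <= (1 - x)^n: if alpha < b < abar and delta is small
     (i.e. k is large), admissibility of abar gives F(x) <= (b/abar) x on
     [0,delta], so x_(i+1) <= delta (b/abar)^i tends to 0.
   The file first proves the two generic orbit lemmas (a barrier below, a
   geometric contraction), then the exponential bounds, then the properties
   of lambda and F, and finally the two halves of the theorem. *)

Lemma orbit_stays_above (u : nat -> R) (f : R -> R) (y : R) :
  (forall i, u (S i) = f (u i)) ->
  y <= u 0%nat <= 1 -> y <= f y ->
  (forall a b, y <= a <= b -> b <= 1 -> f a <= f b) ->
  (forall x, y <= x <= 1 -> f x <= 1) ->
  forall i, y <= u i <= 1.
Proof.
  intros Hrec H0 Hfy Hmono Hle1 i.
  induction i as [|i IH]; [exact H0|].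
  rewrite Hrec. split.
  - apply (Rle_trans _ _ _ Hfy), Hmono; lra.
  - apply Hle1; exact IH.
Qed.

Lemma not_cv_0_of_lower_bound (u : nat -> R) (y : R) :
  0 < y -> (forall i, y <= u i) -> ~ Un_cv u 0.
Proof.
  intros Hy Hlow Hcv.
  destruct (Hcv y Hy) as [N HN]. specialize (HN N (le_n N)).
  specialize (Hlow N). unfold R_dist in HN.
  rewrite Rminus_0_r, Rabs_right in HN by lra. lra.
Qed.

Lemma pow_unit_interval (z : R) (n : nat) : 0 <= z <= 1 -> 0 <= z ^ n <= 1.
Proof.
  intros Hz. split; [apply pow_le; lra|].
  rewrite <- (pow1 n). apply pow_incr; lra.
Qed.

Lemma orbit_geometric_decay (u : nat -> R) (f : R -> R) (c s : R) :
  (forall i, u (S i) = f (u i)) -> 0 <= u 1%nat <= c -> 0 <= s < 1 ->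
  (forall x, 0 <= x <= c -> 0 <= f x <= s * x) ->
  forall i, 0 <= u (S i) <= c * s ^ i.
Proof.
  intros Hrec H1 Hs Hf i.
  induction i as [|i IH]; [simpl; lra|].
  assert (Hsi : 0 <= s ^ i <= 1) by (apply pow_unit_interval; lra).
  assert (Hc : 0 <= c) by lra.
  assert (Hin : 0 <= u (S i) <= c) by nra.
  rewrite Hrec. specialize (Hf _ Hin). simpl pow. nra.
Qed.

Lemma cv_0_of_geometric_bound (u : nat -> R) (c s : R) :
  0 <= s < 1 -> (forall i, 0 <= u (S i) <= c * s ^ i) -> Un_cv u 0.
Proof.
  intros Hs Hu e He.
  assert (Hc : 0 <= c) by (specialize (Hu 0%nat); simpl in Hu; lra).
  assert (Hec : 0 < e / (c + 1)) by (apply Rdiv_lt_0_compat; lra).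
  destruct (pow_lt_1_zero s ltac:(rewrite Rabs_right; lra) _ Hec) as [N HN].
  exists (S N). intros [|m] Hm; [lia|].
  specialize (HN m ltac:(lia)). specialize (Hu m).
  assert (Hsm : 0 <= s ^ m) by (apply pow_le; lra).
  rewrite Rabs_right in HN by lra.
  assert (Hlt : (c + 1) * s ^ m < e).
  { apply (Rmult_lt_compat_l (c + 1)) in HN; [|lra].
    replace ((c + 1) * (e / (c + 1))) with e in HN by (field; lra). exact HN. }
  unfold R_dist. rewrite Rminus_0_r, Rabs_right by lra. nra.
Qed.

Lemma Rdiv_le_1 (a b : R) : 0 < b -> a <= b -> a / b <= 1.
Proof.
  intros Hb Hab. apply (Rmult_le_reg_r b); [exact Hb|].
  unfold Rdiv. rewrite Rmult_assoc, Rinv_l by lra. lra.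
Qed.

Lemma Rdiv_lt_1 (a b : R) : 0 < b -> a < b -> a / b < 1.
Proof.
  intros Hb Hab. apply (Rmult_lt_reg_r b); [exact Hb|].
  unfold Rdiv. rewrite Rmult_assoc, Rinv_l by lra. lra.
Qed.

Lemma exp_le_mono (x y : R) : x <= y -> exp x <= exp y.
Proof.
  intros [Hlt|Heq]; [left; apply exp_increasing; exact Hlt|rewrite Heq; lra].
Qed.

Lemma exp_INR_mult (n : nat) (y : R) : exp (INR n * y) = exp y ^ n.
Proof.
  induction n as [|n IH]; simpl.
  - rewrite Rmult_0_l, exp_0; reflexivity.
  - rewrite <- IH, <- exp_plus. f_equal. destruct n; simpl; lra.
Qed.

(* (1 - y)^n <= exp(-n y), from 1 - y <= exp(-y). *)
Lemma one_minus_pow_le_exp (n : nat) (y : R) : 0 <= y <= 1 ->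
  (1 - y) ^ n <= exp (- (INR n * y)).
Proof.
  intros Hy. replace (- (INR n * y)) with (INR n * (- y)) by ring.
  rewrite exp_INR_mult. apply pow_incr. split; [lra|].
  pose proof (exp_ineq1_le (- y)). lra.
Qed.

(* exp(-n x/(1-x)) <= (1 - x)^n, from 1/(1-x) = 1 + x/(1-x) <= exp(x/(1-x)). *)
Lemma exp_le_one_minus_pow (n : nat) (x : R) : 0 <= x < 1 ->
  exp (- (INR n * (x / (1 - x)))) <= (1 - x) ^ n.
Proof.
  intros Hx. set (y := x / (1 - x)).
  replace (- (INR n * y)) with (INR n * (- y)) by ring.
  rewrite exp_INR_mult. apply pow_incr. split; [left; apply exp_pos|].
  assert (Hy : 1 + y = / (1 - x)) by (unfold y; field; lra).
  rewrite exp_Ropp, <- (Rinv_inv (1 - x)), <- Hy.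
  apply Rinv_le_contravar; [|apply exp_ineq1_le].
  rewrite Hy. apply Rinv_0_lt_compat; lra.
Qed.

Definition de_map (lam : nat -> R) (D : nat) (delta : R) (n : nat) (x : R) : R :=
  delta * lam_poly lam D (1 - (1 - x) ^ n).

Lemma de_seq_S (lam : nat -> R) (D : nat) (delta : R) (k i : nat) :
  de_seq lam D delta k (S i) = de_map lam D delta (k - 1) (de_seq lam D delta k i).
Proof. reflexivity. Qed.

Lemma not_alpha_ok_witness (lam : nat -> R) (D : nat) (j alpha : R) :
  0 <= alpha -> ~ alpha_ok lam D j alpha ->
  exists x, 0 < x <= 1 /\ x < lam_poly lam D (1 - exp (- (alpha * j * x))).
Proof.
  intros Ha Hnot. apply NNPP. intros Hnone. apply Hnot. split; [exact Ha|].
  intros x Hx. apply Rnot_lt_le. intros Hlt. apply Hnone. exists x. split; assumption.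
Qed.

Section DegreeDistribution.
Variables (lam : nat -> R) (D : nat).
Hypothesis Hlam : degree_distribution lam D.

Lemma lam_poly_0 : lam_poly lam D 0 = 0.
Proof.
  destruct Hlam as [Hlow _]. unfold lam_poly.
  rewrite (sum_eq _ (fun _ => 0)), sum_cte; [ring|].
  intros i _. destruct (Nat.lt_ge_cases i 2) as [h|h].
  - rewrite Hlow by exact h. ring.
  - replace (i - 1)%nat with (S (i - 2)) by lia. simpl. ring.
Qed.

Lemma lam_poly_1 : lam_poly lam D 1 = 1.
Proof.
  destruct Hlam as [_ [_ [_ Hsum]]]. unfold lam_poly.
  transitivity (sum_f_R0 lam D); [|exact Hsum].
  apply sum_eq. intros i _. rewrite pow1. ring.
Qed.

Lemma lam_poly_mono (a b : R) : 0 <= a <= b -> lam_poly lam D a <= lam_poly lam D b.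
Proof.
  destruct Hlam as [_ [_ [Hpos _]]]. intros Hab. unfold lam_poly.
  apply sum_Rle. intros i _. apply Rmult_le_compat_l; [apply Hpos|].
  apply pow_incr; exact Hab.
Qed.

Lemma lam_poly_unit_interval (a : R) : 0 <= a <= 1 ->
  0 <= lam_poly lam D a <= 1.
Proof.
  intros Ha. rewrite <- lam_poly_0, <- lam_poly_1.
  split; apply lam_poly_mono; lra.
Qed.

(* j = 1 / int_0^1 lambda is positive: otherwise every alpha >= 0 would be admissible. *)
Lemma j_pos (j abar : R) (pr : Riemann_integrable (lam_poly lam D) 0 1) :
  j = / RiemannInt pr -> alpha_ok lam D j abar ->
  (forall a, alpha_ok lam D j a -> a <= abar) -> 0 < j.
Proof.
  intros Hj [Hab0 _] Hmax.
  assert (Hint : 0 <= RiemannInt pr).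
  { assert (Hb : 0 * (1 - 0) <= RiemannInt pr <= 1 * (1 - 0)); [|lra].
    apply (RiemannInt_const_bound pr ltac:(lra)). intros x Hx.
    apply lam_poly_unit_interval; lra. }
  destruct (Req_dec (RiemannInt pr) 0) as [Hz|Hnz].
  - exfalso. assert (Hok : abar + 1 <= abar); [|lra].
    apply Hmax. split; [lra|]. intros x Hx.
    rewrite Hj, Hz, Rinv_0, Rmult_0_r, Rmult_0_l, Ropp_0, exp_0, Rminus_diag,
      lam_poly_0. lra.
  - rewrite Hj. apply Rinv_0_lt_compat. lra.
Qed.

Lemma de_map_0 (delta : R) (n : nat) : de_map lam D delta n 0 = 0.
Proof. unfold de_map. rewrite Rminus_0_r, pow1, Rminus_diag, lam_poly_0. ring. Qed.

Lemma de_map_range (delta : R) (n : nat) (x : R) : 0 <= delta -> 0 <= x <= 1 ->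
  0 <= de_map lam D delta n x <= delta.
Proof.
  intros Hd Hx. unfold de_map.
  pose proof (pow_unit_interval (1 - x) n ltac:(lra)).
  pose proof (lam_poly_unit_interval (1 - (1 - x) ^ n) ltac:(lra)). nra.
Qed.

Lemma de_map_mono (delta : R) (n : nat) (a b : R) : 0 <= delta ->
  0 <= a <= b -> b <= 1 -> de_map lam D delta n a <= de_map lam D delta n b.
Proof.
  intros Hd Hab Hb. unfold de_map. apply Rmult_le_compat_l; [exact Hd|].
  pose proof (pow_unit_interval (1 - b) n ltac:(lra)).
  assert ((1 - b) ^ n <= (1 - a) ^ n) by (apply pow_incr; lra).
  pose proof (pow_unit_interval (1 - a) n ltac:(lra)).
  apply lam_poly_mono; lra.
Qed.

Lemma de_map_above_diagonal (c delta x : R) (n : nat) :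
  0 <= delta <= 1 -> INR n * delta = c -> 0 < x <= 1 ->
  x < lam_poly lam D (1 - exp (- (c * x))) ->
  delta * x <= de_map lam D delta n (delta * x).
Proof.
  intros Hd Hn Hx Hviol. unfold de_map. apply Rmult_le_compat_l; [lra|].
  assert (Hc : 0 <= c) by (rewrite <- Hn; apply Rmult_le_pos; [apply pos_INR|lra]).
  assert (Hexp1 : exp (- (c * x)) <= 1).
  { rewrite <- exp_0. apply exp_le_mono. nra. }
  pose proof (one_minus_pow_le_exp n (delta * x) ltac:(nra)) as Hpow.
  replace (INR n * (delta * x)) with (c * x) in Hpow by (rewrite <- Hn; ring).
  left. eapply Rlt_le_trans; [exact Hviol|].
  pose proof (exp_pos (- (c * x))). apply lam_poly_mono. lra.
Qed.

Lemma de_map_contraction (j a b delta : R) (n : nat) :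
  alpha_ok lam D j a -> 0 < b <= a -> 0 < j -> 0 < delta < 1 ->
  INR n * delta <= b * j * (1 - delta) ->
  forall x, 0 <= x <= delta -> 0 <= de_map lam D delta n x <= b / a * x.
Proof.
  intros [_ Hok] Hb Hj Hd Hn x Hx.
  split; [apply de_map_range; lra|].
  destruct (Req_dec x 0) as [Hx0|Hx0].
  { rewrite Hx0, de_map_0. lra. }
  set (t := b / a * (x / delta)).
  assert (Ht : 0 < t <= 1).
  { assert (0 < b / a <= 1) by
      (split; [apply Rdiv_lt_0_compat|apply Rdiv_le_1]; lra).
    assert (0 < x / delta <= 1) by
      (split; [apply Rdiv_lt_0_compat|apply Rdiv_le_1]; lra).
    unfold t. nra. }
  assert (Hexponent : INR n * (x / (1 - x)) <= a * j * t).
  { replace (a * j * t) with (b * j * x / delta) by (unfold t; field; lra).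
    assert (Hn' : INR n * delta <= b * j * (1 - x)).
    { assert (0 <= b * j * (delta - x)) by (apply Rmult_le_pos; nra). nra. }
    apply (Rmult_le_reg_r (delta * (1 - x))); [nra|].
    replace (INR n * (x / (1 - x)) * (delta * (1 - x))) with (INR n * delta * x)
      by (field; lra).
    replace (b * j * x / delta * (delta * (1 - x))) with (b * j * (1 - x) * x)
      by (field; lra).
    nra. }
  assert (Hpow : exp (- (a * j * t)) <= (1 - x) ^ n).
  { eapply Rle_trans; [apply exp_le_mono|apply exp_le_one_minus_pow; lra]. lra. }
  assert (Hlam_t : lam_poly lam D (1 - (1 - x) ^ n) <= t).
  { eapply Rle_trans; [|apply (Hok t Ht)].
    pose proof (pow_unit_interval (1 - x) n ltac:(lra)). apply lam_poly_mono. lra. }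
  unfold de_map. replace (b / a * x) with (delta * t) by (unfold t; field; lra).
  apply Rmult_le_compat_l; lra.
Qed.

Lemma de_fails_inadmissible (j alpha : R) (k : nat) :
  0 < j -> 0 < alpha -> ~ alpha_ok lam D j alpha ->
  (2 <= k)%nat -> alpha * j <= INR (k - 1) ->
  ~ Un_cv (de_seq lam D (alpha * j / INR (k - 1)) k) 0.
Proof.
  intros Hj Ha Hnot Hk Hkj.
  destruct (not_alpha_ok_witness lam D j alpha ltac:(lra) Hnot) as [x [Hx Hviol]].
  assert (Hn : 1 <= INR (k - 1)) by (apply (le_INR 1); lia).
  set (delta := alpha * j / INR (k - 1)).
  assert (Hdn : INR (k - 1) * delta = alpha * j) by (unfold delta; field; lra).
  assert (Hd : 0 < delta <= 1).
  { split; [apply Rdiv_lt_0_compat; nra|apply Rdiv_le_1; lra]. }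
  apply (not_cv_0_of_lower_bound _ (delta * x)); [nra|].
  intros i. apply (orbit_stays_above _ (de_map lam D delta (k - 1)) (delta * x)).
  - apply de_seq_S.
  - simpl. nra.
  - apply (de_map_above_diagonal (alpha * j)); lra.
  - intros u v Huv Hv. apply de_map_mono; nra.
  - intros u Hu. pose proof (de_map_range delta (k - 1) u ltac:(lra) ltac:(nra)). lra.
Qed.

(* Part (b): below an admissible a, density evolution succeeds once k is large,
   since then delta is small enough for de_map_contraction with b = (alpha + a)/2. *)
Lemma de_succeeds_below_admissible (j a alpha : R) :
  0 < j -> alpha_ok lam D j a -> 0 < alpha < a ->
  exists K : nat, forall k : nat, (K <= k)%nat -> (2 <= k)%nat ->
    alpha * j <= INR (k - 1) ->
    Un_cv (de_seq lam D (alpha * j / INR (k - 1)) k) 0.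
Proof.
  intros Hj Hok Ha.
  set (b := (alpha + a) / 2).
  set (g := 1 - alpha / b).
  assert (Hg : 0 < g) by (pose proof (Rdiv_lt_1 alpha b ltac:(unfold b; lra)
    ltac:(unfold b; lra)); unfold g; lra).
  assert (Halpha_b : alpha = b * (1 - g)) by (unfold g; field; unfold b; lra).
  destruct (INR_unbounded (alpha * j / g)) as [K HK].
  exists (S K). intros k HKk Hk Hkj.
  assert (HnK : INR K <= INR (k - 1)) by (apply le_INR; lia).
  assert (Hn : 1 <= INR (k - 1)) by (apply (le_INR 1); lia).
  set (delta := alpha * j / INR (k - 1)).
  assert (Hdn : INR (k - 1) * delta = alpha * j) by (unfold delta; field; lra).
  assert (Hd0 : 0 < delta) by (apply Rdiv_lt_0_compat; nra).
  assert (Hdsmall : delta < g).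
  { assert (Hsplit : alpha * j = alpha * j / g * g) by (field; lra).
    assert (alpha * j < g * INR (k - 1)) by nra.
    nra. }
  assert (Hcond : INR (k - 1) * delta <= b * j * (1 - delta)).
  { assert (0 <= b * j * (g - delta)) by (apply Rmult_le_pos; unfold b in *; nra).
    rewrite Hdn. nra. }
  assert (Hs : 0 <= b / a < 1).
  { split; [apply Rlt_le, Rdiv_lt_0_compat|apply Rdiv_lt_1]; unfold b; lra. }
  apply (cv_0_of_geometric_bound _ delta (b / a) Hs).
  apply (orbit_geometric_decay _ (de_map lam D delta (k - 1))).
  - apply de_seq_S.
  - apply de_map_range; lra.
  - exact Hs.
  - assert (Hg1 : g <= 1) by (rewrite Halpha_b in Ha; unfold b in *; nra).
    apply (de_map_contraction j); [exact Hok|unfold b; lra|exact Hj|lra|exact Hcond].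
Qed.

End DegreeDistribution.

Theorem theorem1 (lam : nat -> R) (D : nat) (j abar : R)
  (Hlam : degree_distribution lam D)
  (pr : Riemann_integrable (lam_poly lam D) 0 1)
  (Hj : j = / RiemannInt pr)
  (Habar : alpha_ok lam D j abar /\ (forall a, alpha_ok lam D j a -> a <= abar)) :
  (forall alpha : R, abar < alpha ->
     forall k : nat, (2 <= k)%nat -> alpha * j <= INR (k - 1) ->
       ~ Un_cv (de_seq lam D (alpha * j / INR (k - 1)) k) 0) /\
  (forall alpha : R, 0 < alpha < abar ->
     exists K : nat, forall k : nat, (K <= k)%nat -> (2 <= k)%nat ->
       alpha * j <= INR (k - 1) ->
       Un_cv (de_seq lam D (alpha * j / INR (k - 1)) k) 0).
Proof.
  destruct Habar as [Hok Hmax].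
  pose proof (j_pos lam D Hlam j abar pr Hj Hok Hmax) as Hjpos.
  pose proof (proj1 Hok) as Habar0.
  split.
  - intros alpha Halpha k Hk Hkj.
    apply (de_fails_inadmissible lam D Hlam j alpha k); [exact Hjpos|lra| |exact Hk|exact Hkj].
    intros Hok_alpha. specialize (Hmax _ Hok_alpha). lra.
  - intros alpha Halpha.
    exact (de_succeeds_below_admissible lam D Hlam j abar alpha Hjpos Hok Halpha).
Qed.
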